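(* Let the alphabet be countable, $\varphi_1,\dots,\varphi_n$ sentences, $\mu_0:\{\varphi_1,\dots,\varphi_n\}\to[0,1]$, and $\xi$ a probability on sentences. Suppose $\mu_0$ can be extended to a probability on sentences, and $\xi(\psi_S)>0$ for every $S\subseteq\{1,\dots,n\}$ with $\psi_S$ satisfiable. Then the probability $\hat\mu$ minimally more informative than $\xi$ given $\mu_0$ is the unique minimizer of the relative entropy with respect to $\xi$ under the constraints $\mu(\varphi_i)=\mu_0(\varphi_i)$, $i=1,\dots,n$, and $$\min_{\mu:\ \mu(\varphi_i)=\mu_0(\varphi_i),\,i=1..n}\mathrm{KL}(\mu\|\xi)=\mathrm{KL}(\hat\mu\|\xi)=\sum_{S\subseteq\{1,\dots,n\}}\hat\mu(\psi_S)\log\frac{\hat\mu(\psi_S)}{\xi(\psi_S)}=\sum_{i=1}^n\lambda_i\mu_0(\varphi_i)-\log\Phi(\lambda).$$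
   Context: Setting: higher-order logic (Church's simple theory of types, without a description operator), with Henkin semantics; an alphabet is countable if its set of constants is countable. Sentences are closed terms of type $o$; $\mathcal S$ is the set of sentences. A sentence is valid if true in every interpretation, satisfiable if it has a model. A probability on sentences is a non-negative $\mu:\mathcal S\to\mathbb R$ with $\mu(\varphi)=1$ for valid $\varphi$ and $\mu(\varphi\vee\psi)=\mu(\varphi)+\mu(\psi)$ whenever $\neg(\varphi\wedge\psi)$ is valid. For $S\subseteq\{1,\dots,n\}$, $\psi_S:=(\bigwedge_{i\in S}\varphi_i)\wedge(\bigwedge_{j\in\{1,\dots,n\}\setminus S}\neg\varphi_j)$. The probability $\hat\mu$ minimally more informative than $\xi$ given $\mu_0$ is defined by $\hat\mu(\varphi)=\sum_{S}w_S\,\xi(\varphi\wedge\psi_S)$ with $w_S=\exp(\sum_{j\in S}\lambda_j)/\Phi(\lambda)$, $\Phi(\lambda)=\sum_{S}\exp(\sum_{j\in S}\lambda_j)\,\xi(\psi_S)$, where $\lambda_1,\dots,\lambda_n\in\mathbb R\cup\{-\infty\}$ solve $\mu_0(\varphi_i)=\sum_{S\ni i}w_S\,\xi(\psi_S)$ for $i=1,\dots,n$. Relative entropy: for an enumeration $\phi_1,\phi_2,\dots$ of all sentences and $\psi_{m,T}:=(\bigwedge_{i\in T}\phi_i)\wedge(\bigwedge_{j\in\{1,\dots,m\}\setminus T}\neg\phi_j)$, $\mathrm{KL}(\mu\|\xi):=\lim_{m\to\infty}\sum_{T\subseteq\{1,\dots,m\}}\mu(\psi_{m,T})\log\frac{\mu(\psi_{m,T})}{\xi(\psi_{m,T})}$,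 with conventions $0\log\frac0x=0$ and $y\log\frac y0=\infty$ for $y>0$ (the limit exists and is independent of the enumeration). *)

From HB Require Import structures.
From mathcomp Require Import all_boot all_order all_algebra.
From mathcomp Require Import all_classical all_reals all_analysis.
Set Implicit Arguments. Unset Strict Implicit. Unset Printing Implicit Defensive.
Import Order.TTheory GRing.Theory Num.Theory.

(* Church's simple type theory (no description operator).             *)
Inductive ty : Type := To | Ti | Tarr (a b : ty).

Inductive var : list ty -> ty -> Type :=
| vz (G : list ty) (a : ty) : var (a :: G) a
| vs (G : list ty) (a b : ty) : var G a -> var (b :: G) a.

Inductive tm (C : Type) (ctype : C -> ty) : list ty -> ty -> Type :=
| hvar (G : list ty) (a : ty) : var G a -> tm ctype G a
| hcon (G : list ty) (c : C) : tm ctype G (ctype c)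
| happ (G : list ty) (a b : ty) : tm ctype G (Tarr a b) -> tm ctype G a -> tm ctype G b
| hlam (G : list ty) (a b : ty) : tm ctype (a :: G) b -> tm ctype G (Tarr a b)
| hneg (G : list ty) : tm ctype G (Tarr To To)
| hor  (G : list ty) : tm ctype G (Tarr To (Tarr To To))
| hpi  (G : list ty) (a : ty) : tm ctype G (Tarr (Tarr a To) To).

Definition sent (C : Type) (ctype : C -> ty) := tm ctype nil To.

Section Connectives.
Variables (C : Type) (ctype : C -> ty).
Definition sNot (s : sent ctype) : sent ctype := happ (hneg ctype nil) s.
Definition sOr (s t : sent ctype) : sent ctype := happ (happ (hor ctype nil) s) t.
Definition sAnd (s t : sent ctype) : sent ctype := sNot (sOr (sNot s) (sNot t)).
(* falsum := Pi_o (lambda p. p), verum := ~ falsum *)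
Definition sTop : sent ctype :=
  sNot (happ (hpi ctype nil To) (hlam (hvar ctype (vz nil To)))).
End Connectives.

(* Henkin semantics (Andrews' general models).                         *)
Record frame := Frame {
  dom : ty -> Type;
  app : forall a b, dom (Tarr a b) -> dom a -> dom b;
  app_ext : forall a b (f g : dom (Tarr a b)), (forall x, app f x = app g x) -> f = g;
  tv : dom To -> bool;
  tv_bij : bijective tv;
  dom_i_inh : inhabited (dom Ti) }.

Fixpoint env (F : frame) (G : list ty) : Type :=
  match G with nil => unit | a :: G' => (dom F a * env F G')%type end.

Fixpoint lookup (F : frame) (G : list ty) (a : ty) (x : var G a) : env F G -> dom F a :=
  match x in var G a return env F G -> dom F a with
  | vz _ _ => fun e => e.1
  | vs _ _ _ x' => fun e => lookup x' e.2
  end.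

Record model (C : Type) (ctype : C -> ty) := Model {
  mfr : frame;
  J : forall c : C, dom mfr (ctype c);
  V : forall G a, tm ctype G a -> env mfr G -> dom mfr a;
  V_var : forall G a (x : var G a) e, V (hvar ctype x) e = lookup x e;
  V_con : forall G c e, V (hcon ctype G c) e = J c;
  V_app : forall G a b (f : tm ctype G (Tarr a b)) t e,
      V (happ f t) e = app (V f e) (V t e);
  V_lam : forall G a b (t : tm ctype (a :: G) b) e d,
      app (V (hlam t) e) d = V t (d, e);
  V_neg : forall G e p, tv (app (V (hneg ctype G) e) p) = ~~ tv p;
  V_or : forall G e p q, tv (app (app (V (hor ctype G) e) p) q) = tv p || tv q;
  V_pi : forall G a e f,
      tv (app (V (hpi ctype G a) e) f) = true <-> (forall x, tv (app f x) = true) }.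

Definition truth C (ctype : C -> ty) (M : model ctype) (s : sent ctype) : Prop :=
  tv (@V C ctype M nil To s tt) = true.

Definition valid C (ctype : C -> ty) (s : sent ctype) : Prop :=
  forall M : model ctype, truth M s.

Definition satisfiable C (ctype : C -> ty) (s : sent ctype) : Prop :=
  exists M : model ctype, truth M s.

Definition countable_alphabet (C : Type) : Prop := exists f : C -> nat, injective f.

Local Open Scope ring_scope.

Definition is_prob (R : realType) C (ctype : C -> ty) (mu : sent ctype -> R) : Prop :=
  [/\ forall s, 0 <= mu s,
      forall s, valid s -> mu s = 1
    & forall s t, valid (sNot (sAnd s t)) -> mu (sOr s t) = mu s + mu t].

(* psi_S = /\_{i in S} phi_i /\ /\_{j notin S} ~ phi_j  (right-nested,   *)
(* terminated by verum; equivalent to the paper's conjunction)          *)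
Definition lit C (ctype : C -> ty) (s : sent ctype) (b : bool) : sent ctype :=
  if b then s else sNot s.

Definition psi C (ctype : C -> ty) (n : nat) (phi : 'I_n -> sent ctype)
  (S : {set 'I_n}) : sent ctype :=
  \big[@sAnd C ctype/sTop ctype]_(i < n) lit (phi i) (i \in S).

Definition expE (R : realType) (x : \bar R) : R :=
  if x is r%:E then expR r else 0.

Section MinInfo.
Variables (R : realType) (C : Type) (ctype : C -> ty) (n : nat).
Variables (xi : sent ctype -> R) (phi : 'I_n -> sent ctype) (lam : 'I_n -> \bar R).

Definition Phi : R :=
  \sum_(S : {set 'I_n}) expE (\sum_(j in S) lam j)%E * xi (psi phi S).

Definition wS (S : {set 'I_n}) : R := expE (\sum_(j in S) lam j)%E / Phi.

Definition mu_hat (s : sent ctype) : R :=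
  \sum_(S : {set 'I_n}) wS S * xi (sAnd s (psi phi S)).
End MinInfo.

Definition klterm (R : realType) (y x : R) : \bar R :=
  if y == 0 then 0%E else if x == 0 then +oo%E else (y * ln (y / x))%:E.

Definition KLpart (R : realType) C (ctype : C -> ty) (e : nat -> sent ctype)
  (mu xi : sent ctype -> R) (m : nat) : \bar R :=
  (\sum_(T : {set 'I_m})
     klterm (mu (psi (fun i : 'I_m => e i) T)) (xi (psi (fun i : 'I_m => e i) T)))%E.

Definition KL (R : realType) C (ctype : C -> ty) (e : nat -> sent ctype)
  (mu xi : sent ctype -> R) : \bar R :=
  limn (KLpart e mu xi).

(* On each cell psi_S the measure mu_hat is w_S * xi, so along any enumeration
   that eventually contains the phi_i its partial relative entropies are
   eventually constant, equal to sum_S w_S xi(psi_S) log w_S; since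
   log w_S = sum_(j in S) lambda_j - log Phi, the moment equations turn this into
   the dual expression.  For another mu with the same moments, on a fine enough
   partition the partial relative entropy splits as the relative entropy of mu
   with respect to mu_hat on that partition plus the same constant, because the
   constraints fix sum_T mu(T) log w_S(T).  Gibbs' inequality makes the first
   term positive on a partition separating mu from mu_hat, and the log-sum
   inequality makes partial relative entropies grow under refinement. *)

From HB Require Import structures.
From mathcomp Require Import all_boot all_order all_algebra.
From mathcomp Require Import all_classical all_reals all_analysis.
From mathcomp Require Import ring lra.
Import Order.TTheory GRing.Theory Num.Theory.
Local Open Scope ring_scope.
Set Implicit Arguments. Unset Strict Implicit. Unset Printing Implicit Defensive.

Section Semantics.
Variables (C : Type) (ctype : C -> ty).
Implicit Types (M : model ctype) (s t : sent ctype).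

Definition holds M s : bool := tv (@V C ctype M nil To s tt).

Lemma holds_not M s : holds M (sNot s) = ~~ holds M s.
Proof. by rewrite /holds /sNot V_app V_neg. Qed.

Lemma holds_or M s t : holds M (sOr s t) = holds M s || holds M t.
Proof. by rewrite /holds /sOr !V_app V_or. Qed.

Lemma holds_and M s t : holds M (sAnd s t) = holds M s && holds M t.
Proof. by rewrite /sAnd holds_not holds_or !holds_not negb_or !negbK. Qed.

Lemma holds_top M : holds M (sTop ctype).
Proof.
rewrite /sTop holds_not /holds V_app; apply/negP => /V_pi falsum_true.
have [tv_inv _ tvK] := tv_bij (mfr M).
by have := falsum_true (tv_inv false); rewrite V_lam V_var /= tvK.
Qed.

Lemma holds_bigAnd M (I : Type) (r : seq I) (P : pred I) (F : I -> sent ctype) :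
  holds M (\big[@sAnd C ctype/sTop ctype]_(i <- r | P i) F i) =
  \big[andb/true]_(i <- r | P i) holds M (F i).
Proof. by apply: (big_morph (holds M)); [exact: holds_and | exact: holds_top]. Qed.

Lemma holds_bigOr M (I : Type) (r : seq I) (F : I -> sent ctype) :
  holds M (\big[@sOr C ctype/sNot (sTop ctype)]_(i <- r) F i) = has (holds M \o F) r.
Proof.
elim: r => [|i r IHr]; first by rewrite big_nil holds_not holds_top.
by rewrite big_cons holds_or IHr.
Qed.

Lemma holds_psi M m (f : 'I_m -> sent ctype) (T : {set 'I_m}) :
  holds M (psi f T) = [forall i, holds M (f i) == (i \in T)].
Proof.
rewrite /psi holds_bigAnd big_andE; apply: eq_forallb => i.
by rewrite /lit; case: (i \in T); rewrite ?holds_not ?eqb_id ?eqbF_neg.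
Qed.

Lemma holds_psi_mem M m (f : 'I_m -> sent ctype) (T : {set 'I_m}) i :
  holds M (psi f T) -> holds M (f i) = (i \in T).
Proof. by rewrite holds_psi => /forallP /(_ i) /eqP. Qed.

Definition sent_partition (J : finType) (d : J -> sent ctype) :=
  (forall M j j', holds M (d j) -> holds M (d j') -> j = j') /\
  (forall M, exists j, holds M (d j)).

Lemma psi_partition m (f : 'I_m -> sent ctype) : sent_partition (psi f).
Proof.
split=> [M T T'|M].
  rewrite !holds_psi => /forallP fT /forallP fT'.
  by apply/setP => i; move: (fT i) (fT' i) => /eqP <- /eqP <-.
exists [set i | holds M (f i)]; rewrite holds_psi.
by apply/forallP => i; rewrite inE.
Qed.

Section Probability.
Variables (R : realType) (mu : sent ctype -> R).
Hypothesis mu_prob : is_prob mu.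

Lemma prob_ge0 s : 0 <= mu s. Proof. by case: mu_prob. Qed.

Lemma prob_valid s : (forall M, holds M s) -> mu s = 1.
Proof. by case: mu_prob => _ mu_valid _ ?; apply: mu_valid. Qed.

Lemma prob_or s t :
  (forall M, ~~ (holds M s && holds M t)) -> mu (sOr s t) = mu s + mu t.
Proof.
case: mu_prob => _ _ mu_add disj; apply: mu_add => M.
by rewrite /truth -/(holds M _) holds_not holds_and; exact: disj.
Qed.

Lemma prob_equiv s t : (forall M, holds M s = holds M t) -> mu s = mu t.
Proof.
move=> st; apply: (addIr (mu (sNot t))).
have <- : mu (sOr s (sNot t)) = mu s + mu (sNot t).
  by apply: prob_or => M; rewrite holds_not st; case: holds.
have <- : mu (sOr t (sNot t)) = mu t + mu (sNot t).
  by apply: prob_or => M; rewrite holds_not; case: holds.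
by rewrite !prob_valid // => M; rewrite holds_or holds_not ?st orbN.
Qed.

Lemma prob_unsat s : (forall M, ~~ holds M s) -> mu s = 0.
Proof.
move=> unsat.
have : mu (sOr s s) = mu s + mu s.
  by apply: prob_or => M; rewrite (negbTE (unsat M)).
rewrite (@prob_equiv _ s) => [?|M]; [lra | by rewrite holds_or orbb].
Qed.

Lemma prob_le s t : (forall M, holds M s -> holds M t) -> mu s <= mu t.
Proof.
move=> st.
have <- : mu (sOr s (sAnd t (sNot s))) = mu t.
  apply: prob_equiv => M; rewrite holds_or holds_and holds_not.
  by case: (boolP (holds M s)) => [/st -> | _]; rewrite ?andbT ?orbF.
rewrite prob_or ?lerDl ?prob_ge0 // => M.
by rewrite holds_and holds_not; case: holds; rewrite ?andbF.
Qed.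

Lemma prob_bigOr (J : eqType) (g : J -> sent ctype) r :
  uniq r -> (forall M j j', holds M (g j) -> holds M (g j') -> j = j') ->
  mu (\big[@sOr C ctype/sNot (sTop ctype)]_(j <- r) g j) = \sum_(j <- r) mu (g j).
Proof.
move=> + excl; elim: r => [_|j r IHr /= /andP[jr r_uniq]].
  by rewrite !big_nil; apply: prob_unsat => M; rewrite holds_not holds_top.
rewrite !big_cons prob_or ?IHr // => M; rewrite holds_bigOr.
apply/negP => /andP[gj /hasP[j' j'r gj']].
by move: jr; rewrite (excl M j j' gj gj') j'r.
Qed.

Lemma prob_split (J : finType) (d : J -> sent ctype) s :
  sent_partition d -> mu s = \sum_j mu (sAnd s (d j)).
Proof.
move=> [excl exh]; rewrite -big_enum /= -prob_bigOr ?enum_uniq //; last first.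
  by move=> M j j'; rewrite !holds_and => /andP[_ /excl] + /andP[_]; apply.
apply: prob_equiv => M; rewrite holds_bigOr; apply/idP/hasP => [sM|[j _]].
  by have [j dj] := exh M; exists j; rewrite ?mem_enum //= holds_and sM.
by rewrite /= holds_and => /andP[].
Qed.

Lemma prob_sum_cells (J : finType) (d : J -> sent ctype) (g : pred J) s :
  sent_partition d -> (forall M j, holds M (d j) -> holds M s = g j) ->
  mu s = \sum_(j | g j) mu (d j).
Proof.
move=> d_part s_cells; rewrite (prob_split s d_part) [RHS]big_mkcond /=.
apply: eq_bigr => j _; case: ifP => gj.
  apply: prob_equiv => M; rewrite holds_and.
  by case: (boolP (holds M (d j))) => [/s_cells -> | _]; rewrite ?andbT ?andbF.
apply: prob_unsat => M; rewrite holds_and.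
by case: (boolP (holds M (d j))) => [/s_cells -> | _]; rewrite ?gj ?andbF.
Qed.

Lemma prob_partition_sum1 (J : finType) (d : J -> sent ctype) :
  sent_partition d -> \sum_j mu (d j) = 1.
Proof.
move=> d_part; rewrite -(@prob_valid (sTop ctype)) => [|M]; last exact: holds_top.
by rewrite (prob_sum_cells (g := xpredT) d_part) // => M j _; rewrite holds_top.
Qed.

End Probability.
End Semantics.

Section Entropy.
Variable R : realType.
Implicit Types a b c x : R.

Lemma ln_le_subr1 x : 0 < x -> ln x <= x - 1.
Proof. by move=> x0; rewrite lerBrDl -{2}(lnK (x := x)) ?posrE // expR_ge1Dx. Qed.

Lemma ln_lt_subr1 x : 0 < x -> x != 1 -> ln x < x - 1.
Proof.
move=> x0 x1; rewrite ltrBrDl -{2}(lnK (x := x)) ?posrE // expR_gt1Dx //.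
by rewrite ln_eq0.
Qed.

Lemma mul_ln_div_gap a c : 0 < a -> 0 < c ->
  a * ln (a / c) = a - c + a * (c / a - 1 - ln (c / a)).
Proof.
move=> a0 c0; rewrite -invf_div lnV ?posrE ?divr_gt0 // mulrBr mulrBr mulrCA.
by rewrite mulfV ?gt_eqF // mulr1; ring.
Qed.

Lemma subr_le_mul_ln_div a c : 0 <= a -> 0 <= c -> (0 < a -> 0 < c) ->
  a - c <= a * ln (a / c).
Proof.
move=> a0 c0 ac; have [->|a_neq0] := eqVneq a 0; first by rewrite mul0r sub0r oppr_le0.
have a_gt0 : 0 < a by rewrite lt_def a_neq0.
rewrite mul_ln_div_gap ?ac // lerDl mulr_ge0 // subr_ge0.
by rewrite ln_le_subr1 ?divr_gt0 ?ac.
Qed.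

Lemma subr_lt_mul_ln_div a c : 0 <= a -> 0 <= c -> (0 < a -> 0 < c) -> a != c ->
  a - c < a * ln (a / c).
Proof.
move=> a0 c0 ac a_neq_c; have [a_eq0|a_neq0] := eqVneq a 0.
  by rewrite a_eq0 mul0r sub0r oppr_lt0 lt_def c0 andbT eq_sym -a_eq0.
have a_gt0 : 0 < a by rewrite lt_def a_neq0.
rewrite mul_ln_div_gap ?ac // ltrDl mulr_gt0 // subr_gt0 ln_lt_subr1 ?divr_gt0 ?ac //.
by apply: contra a_neq_c => /eqP/divr1_eq ->.
Qed.

Section Gibbs.
Variables (I : finType) (P : pred I) (a c : I -> R).
Hypotheses (a_ge0 : forall i, 0 <= a i) (c_ge0 : forall i, 0 <= c i).
Hypotheses (ac : forall i, P i -> 0 < a i -> 0 < c i)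
  (sum_ac : \sum_(i | P i) a i = \sum_(i | P i) c i).

Lemma gibbs_le : 0 <= \sum_(i | P i) a i * ln (a i / c i).
Proof.
rewrite [leLHS](_ : _ = \sum_(i | P i) (a i - c i)); last by rewrite sumrB sum_ac subrr.
by apply: ler_sum => i Pi; apply: subr_le_mul_ln_div => //; apply: ac.
Qed.

Lemma gibbs_lt : (exists2 i, P i & a i != c i) ->
  0 < \sum_(i | P i) a i * ln (a i / c i).
Proof.
move=> [i Pi ai_neq_ci].
rewrite [ltLHS](_ : _ = \sum_(i | P i) (a i - c i)); last by rewrite sumrB sum_ac subrr.
rewrite (bigD1 i) //= [ltRHS](bigD1 i) //= ltr_leD //.
  by apply: subr_lt_mul_ln_div => //; apply: ac.
by apply: ler_sum => j /andP[Pj _]; apply: subr_le_mul_ln_div => //; apply: ac.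
Qed.

End Gibbs.

Lemma psumr_gt0_dominated (I : finType) (P : pred I) (a b : I -> R) :
  (forall i, 0 <= a i) -> (forall i, 0 <= b i) -> (forall i, P i -> 0 < a i -> 0 < b i) ->
  0 < \sum_(i | P i) a i -> 0 < \sum_(i | P i) b i.
Proof.
move=> a_ge0 b_ge0 ab /gt_eqF/negbT/eqP.
move=> /(psumr_neq0P (fun i _ => a_ge0 i)) [i /andP[Pi ai_gt0]].
by rewrite (lt_le_trans (ab _ Pi ai_gt0)) // (bigD1 i) //= lerDl sumr_ge0.
Qed.

Lemma log_sum_le (I : finType) (P : pred I) (a b : I -> R) :
  (forall i, 0 <= a i) -> (forall i, 0 <= b i) -> (forall i, P i -> 0 < a i -> 0 < b i) ->
  (\sum_(i | P i) a i) * ln ((\sum_(i | P i) a i) / \sum_(i | P i) b i) <=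
  \sum_(i | P i) a i * ln (a i / b i).
Proof.
move=> a_ge0 b_ge0 ab.
set A := \sum_(i | P i) a i; set B := \sum_(i | P i) b i; have [A0|A_neq0] := eqVneq A 0.
  have a0 := psumr_eq0P (fun i _ => a_ge0 i) A0.
  by rewrite A0 mul0r big1 // => i Pi; rewrite a0 // mul0r.
have A_gt0 : 0 < A by rewrite lt_def A_neq0 sumr_ge0.
have B_gt0 : 0 < B by apply: psumr_gt0_dominated A_gt0.
have k_gt0 : 0 < A / B by rewrite divr_gt0.
have split_ln i : P i ->
    a i * ln (a i / (b i * (A / B))) = a i * ln (a i / b i) - a i * ln (A / B).
  move=> Pi; have [->|ai_neq0] := eqVneq (a i) 0; first by rewrite !mul0r subrr.
  have ai_gt0 : 0 < a i by rewrite lt_def ai_neq0 a_ge0.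
  by rewrite invfM mulrA (@ln_div _ (a i / b i)) ?posrE ?divr_gt0 ?ab // mulrBr.
have -> : A * ln (A / B) = \sum_(i | P i) a i * ln (A / B) by rewrite mulr_suml.
rewrite -subr_ge0 -sumrB -(eq_bigr _ split_ln).
apply: gibbs_le => [// | i | i Pi ai_gt0 | ].
- by rewrite mulr_ge0 // ltW.
- by rewrite mulr_gt0 ?ab.
- by rewrite -mulr_suml -/B mulrCA mulfV ?gt_eqF // mulr1.
Qed.

Lemma expE_ge0 (x : \bar R) : 0 <= expE x.
Proof. by case: x => //= r; exact: expR_ge0. Qed.

Lemma klterm_fin a b : 0 <= a -> (0 < a -> 0 < b) -> klterm a b = (a * ln (a / b))%:E.
Proof.
rewrite /klterm; have [->|a_neq0 a_ge0 ab] := eqVneq a 0; first by rewrite mul0r.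
by rewrite gt_eqF // ab // lt_def a_neq0.
Qed.

Lemma klterm_neqNy a b : klterm a b != -oo%E.
Proof. by rewrite /klterm; case: ifP => //; case: ifP. Qed.

Lemma klterm_eqy a : 0 < a -> klterm a 0 = +oo%E.
Proof. by move=> a_gt0; rewrite /klterm gt_eqF // eqxx. Qed.

Lemma klterm_mull w x : 0 <= w -> 0 <= x -> klterm (w * x) x = (w * x * ln w)%:E.
Proof.
move=> w_ge0 x_ge0; rewrite /klterm; have [->|wx_neq0] := eqVneq (w * x) 0.
  by rewrite mul0r.
have x_neq0 : x != 0 by apply: contraNneq wx_neq0 => ->; rewrite mulr0.
by rewrite (negbTE x_neq0) mulfK.
Qed.

Lemma klterm_sum_le (I : finType) (P : pred I) (a b : I -> R) :
  (forall i, 0 <= a i) -> (forall i, 0 <= b i) ->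
  (klterm (\sum_(i | P i) a i) (\sum_(i | P i) b i) <= \sum_(i | P i) klterm (a i) (b i))%E.
Proof.
move=> a_ge0 b_ge0.
have [[i [Pi [ai_gt0 bi0]]] | not_dom] :=
  pselect (exists i, P i /\ 0 < a i /\ b i = 0).
  suff -> : (\sum_(i | P i) klterm (a i) (b i) = +oo)%E by rewrite leey.
  apply/eqP; rewrite esum_eqy => [|j _]; last exact: klterm_neqNy.
  by apply/existsP; exists i; apply/andP; split => //; rewrite bi0 klterm_eqy.
have ab i : P i -> 0 < a i -> 0 < b i.
  move=> Pi ai_gt0; rewrite lt_def b_ge0 andbT.
  by apply/eqP => bi0; apply: not_dom; exists i.
rewrite (eq_bigr _ (fun i Pi => klterm_fin (a_ge0 i) (ab i Pi))) sumEFin.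
rewrite klterm_fin ?sumr_ge0 ?lee_fin ?log_sum_le // => A_gt0.
exact: psumr_gt0_dominated A_gt0.
Qed.

End Entropy.

Section RelativeEntropy.
Variables (R : realType) (C : Type) (ctype : C -> ty).
Variables (xi : sent ctype -> R) (e : nat -> sent ctype).
Hypothesis xi_prob : is_prob xi.

Lemma klterm_refine_le (mu : sent ctype -> R) (I J : finType)
    (c : I -> sent ctype) (d : J -> sent ctype) (r : J -> I) :
  is_prob mu -> sent_partition c -> sent_partition d ->
  (forall M j, holds M (d j) -> holds M (c (r j))) ->
  (\sum_i klterm (mu (c i)) (xi (c i)) <= \sum_j klterm (mu (d j)) (xi (d j)))%E.
Proof.
move=> mu_prob c_part d_part dc.
have coarse nu : is_prob nu -> forall i, nu (c i) = \sum_(j | r j == i) nu (d j).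
  move=> nu_prob i; apply: prob_sum_cells => // M j /[dup] /dc cj dj.
  by apply/idP/eqP => [ci | <- //]; apply: (proj1 c_part M).
rewrite (partition_big r xpredT) //=; apply: lee_sum => i _.
by rewrite !coarse //; apply: klterm_sum_le => j; exact: prob_ge0.
Qed.

Lemma KLpart_nondecreasing mu : is_prob mu -> nondecreasing_seq (KLpart e mu xi).
Proof.
move=> mu_prob; apply/nondecreasing_seqP => m.
pose restrict (T : {set 'I_m.+1}) := [set i : 'I_m | widen_ord (leqnSn m) i \in T].
apply: (klterm_refine_le (r := restrict) mu_prob (psi_partition _) (psi_partition _)).
move=> M T /holds_psi_mem cellT; rewrite holds_psi; apply/forallP => i.
by rewrite inE -(cellT (widen_ord (leqnSn m) i)).
Qed.

Lemma KLpart_le_KL mu m : is_prob mu -> (KLpart e mu xi m <= KL e mu xi)%E.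
Proof.
move=> mu_prob; have KL_cvg := ereal_nondecreasing_cvgn (KLpart_nondecreasing mu_prob).
rewrite /KL (cvg_lim _ KL_cvg) //.
by apply: ereal_sup_ubound; exists m.
Qed.

Lemma KL_eqy mu m (T : {set 'I_m}) : is_prob mu ->
  0 < mu (psi (fun i : 'I_m => e i) T) -> xi (psi (fun i : 'I_m => e i) T) = 0 ->
  KL e mu xi = +oo%E.
Proof.
move=> mu_prob mu_gt0 xi0; apply/eqP; rewrite eq_le leey /=.
apply: le_trans (KLpart_le_KL m mu_prob); rewrite leye_eq esum_eqy => [|T' _].
  by apply/existsP; exists T; rewrite xi0 klterm_eqy.
exact: klterm_neqNy.
Qed.

Lemma exists_cell_neq (mu nu : sent ctype -> R) m1 :
  (forall s, exists m, e m = s) -> is_prob mu -> is_prob nu -> mu <> nu ->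
  exists m, (m1 <= m)%N /\
    exists T : {set 'I_m}, mu (psi (fun i : 'I_m => e i) T) != nu (psi (fun i : 'I_m => e i) T).
Proof.
move=> e_surj mu_prob nu_prob mu_neq_nu.
have [s mus_neq] : exists s, mu s <> nu s.
  by apply/existsNP => mu_eq_nu; apply: mu_neq_nu; apply/funext.
have [k sk] := e_surj s; pose m := maxn m1 k.+1.
exists m; split; first exact: leq_maxl.
pose t : 'I_m := Ordinal (leq_maxr m1 k.+1).
have s_cells (rho : sent ctype -> R) : is_prob rho ->
    rho s = \sum_(T : {set 'I_m} | t \in T) rho (psi (fun i : 'I_m => e i) T).
  move=> rho_prob; apply: prob_sum_cells (psi_partition _) _ => // M T.
  by move=> /(holds_psi_mem t) <-; rewrite -sk.
apply: contra_notP mus_neq => cells_eq; rewrite !s_cells //; apply: eq_bigr => T _.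
by apply/eqP/negPn/negP => cell_neq; apply: cells_eq; exists T.
Qed.

End RelativeEntropy.

Section MinimallyMoreInformative.
Variables (R : realType) (C : Type) (ctype : C -> ty) (n : nat).
Variables (phi : 'I_n -> sent ctype) (mu0 : 'I_n -> R) (xi : sent ctype -> R).
Variable lam : 'I_n -> \bar R.
Hypotheses (xi_prob : is_prob xi)
  (mu0_ext : exists mu : sent ctype -> R, is_prob mu /\ forall i, mu (phi i) = mu0 i)
  (xi_pos : forall S : {set 'I_n}, satisfiable (psi phi S) -> 0 < xi (psi phi S))
  (lam_neqy : forall j, lam j != +oo%E)
  (lam_sol : forall i : 'I_n,
      mu0 i = \sum_(S : {set 'I_n} | i \in S) wS xi phi lam S * xi (psi phi S)).

Local Notation w := (wS xi phi lam).
Local Notation Phi := (Phi xi phi lam).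
Local Notation mu_hat := (mu_hat xi phi lam).

(* [fine] sends -oo to 0; this is harmless because lam j = -oo forces mu0 j = 0. *)
Definition lamr j : R := fine (lam j).

Definition lam_finite_on (S : {set 'I_n}) := [forall j in S, lam j != -oo%E].

Lemma expE_sum_finite S : lam_finite_on S ->
  expE (\sum_(j in S) lam j)%E = expR (\sum_(j in S) lamr j).
Proof.
move=> /forall_inP S_fin; rewrite (eq_bigr (fun j => (lamr j)%:E)) ?sumEFin // => j jS.
by rewrite /lamr fineK // fin_numE S_fin // lam_neqy.
Qed.

Lemma wS_infinite S : ~~ lam_finite_on S -> w S = 0.
Proof.
move=> /forall_inPn [j jS /negPn /eqP lamj].
suff /eqP sum_Ny : (\sum_(j in S) lam j == -oo)%E by rewrite /wS sum_Ny mul0r.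
by rewrite esum_eqNy; apply/existsP; exists j; rewrite jS lamj eqxx.
Qed.

Lemma Phi_ge0 : 0 <= Phi.
Proof. by apply: sumr_ge0 => S _; rewrite mulr_ge0 ?expE_ge0 ?prob_ge0. Qed.

Lemma wS_ge0 S : 0 <= w S.
Proof. by rewrite divr_ge0 ?expE_ge0 ?Phi_ge0. Qed.

Lemma mu0_lamNy j : lam j = -oo%E -> mu0 j = 0.
Proof.
move=> lamj; rewrite lam_sol big1 // => S jS; rewrite wS_infinite ?mul0r //.
by apply/forall_inPn; exists j; rewrite ?lamj.
Qed.

(* If Phi = 0 then every mu0 i = 0, so an extension of mu0 gives probability 0
   to all psi_S with S nonempty; psi_set0 is then either xi-positive (and
   bounds Phi from below) or unsatisfiable, and the psi_S could not sum to 1. *)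
Lemma Phi_gt0 : 0 < Phi.
Proof.
rewrite lt_def Phi_ge0 andbT; apply/eqP => Phi0.
have mu0_eq0 i : mu0 i = 0.
  by rewrite lam_sol big1 // => S _; rewrite /wS Phi0 invr0 mulr0 mul0r.
have [psi0_sat | psi0_unsat] := pselect (satisfiable (psi phi finset.set0)).
  suff : xi (psi phi finset.set0) <= Phi by rewrite Phi0 leNgt xi_pos.
  rewrite /Phi (bigD1 finset.set0) //= big_set0 /= expR0 mul1r lerDl.
  by apply: sumr_ge0 => S _; rewrite mulr_ge0 ?expE_ge0 ?prob_ge0.
have [mu [mu_prob mu_phi]] := mu0_ext.
have := prob_partition_sum1 mu_prob (psi_partition phi).
rewrite big1 => [/esym/eqP | S _]; first by rewrite oner_eq0.
have [-> | /set0Pn [j jS]] := eqVneq S finset.set0.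
  by apply: prob_unsat => // M; apply/negP => psiM; apply: psi0_unsat; exists M.
apply/eqP; rewrite eq_le prob_ge0 // andbT -(mu0_eq0 j) -(mu_phi j).
by apply: prob_le => // M /holds_psi_mem ->.
Qed.

Lemma wS_gt0 S : lam_finite_on S -> 0 < w S.
Proof. by move=> S_fin; rewrite /wS expE_sum_finite ?divr_gt0 ?expR_gt0 ?Phi_gt0. Qed.

Lemma ln_wS S : lam_finite_on S -> ln (w S) = \sum_(j in S) lamr j - ln Phi.
Proof.
by move=> S_fin; rewrite /wS expE_sum_finite // ln_div ?posrE ?expR_gt0 ?Phi_gt0 // expRK.
Qed.

Lemma sum_wS : \sum_(S : {set 'I_n}) w S * xi (psi phi S) = 1.
Proof.
under eq_bigr => S _ do rewrite /wS mulrAC.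
by rewrite -mulr_suml divff ?gt_eqF ?Phi_gt0.
Qed.

Lemma mu_hat_cell s S : (forall M, holds M s -> holds M (psi phi S)) ->
  mu_hat s = w S * xi s.
Proof.
move=> s_psi; rewrite /mu_hat (bigD1 S) //= big1 ?addr0 => [|S' S'_neq].
  congr (_ * _); apply: prob_equiv => // M; rewrite holds_and.
  by case: (boolP (holds M s)) => [/s_psi -> | _].
rewrite (@prob_unsat _ _ _ xi) ?mulr0 // => M; rewrite holds_and.
apply/negP => /andP[/s_psi psiS psiS']; move/eqP: S'_neq; apply.
exact: (proj1 (psi_partition phi) M _ _ psiS' psiS).
Qed.

Lemma mu_hat_prob : is_prob mu_hat.
Proof.
split=> [s | s s_valid | s t st_disj].
- by apply: sumr_ge0 => S _; rewrite mulr_ge0 ?wS_ge0 ?prob_ge0.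
- rewrite /mu_hat -sum_wS; apply: eq_bigr => S _; congr (_ * _).
  by apply: prob_equiv => // M; rewrite holds_and (s_valid M : holds M s).
- rewrite /mu_hat -big_split /=; apply: eq_bigr => S _; rewrite -mulrDr -prob_or //.
    congr (_ * _); apply: prob_equiv => // M.
    by rewrite !holds_and !holds_or !holds_and andb_orl.
  move=> M; rewrite !holds_and; have := st_disj M.
  rewrite /truth -/(holds M _) holds_not holds_and.
  by case: (holds M s); case: (holds M t); case: (holds M (psi phi S)).
Qed.

Lemma mu_hat_phi i : mu_hat (phi i) = mu0 i.
Proof.
rewrite lam_sol /mu_hat [RHS]big_mkcond /=; apply: eq_bigr => S _.
case: ifP => iS.
  congr (_ * _); apply: prob_equiv => // M; rewrite holds_and.
  case: (boolP (holds M (psi phi S))) => [/holds_psi_mem -> | _].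
    by rewrite iS andbT.
  by rewrite andbF.
rewrite (@prob_unsat _ _ _ xi) ?mulr0 // => M; rewrite holds_and.
by apply/negP => /andP[phiM /(holds_psi_mem i) psiM]; move: phiM; rewrite psiM iS.
Qed.

Definition KLhat := \sum_(S : {set 'I_n}) w S * xi (psi phi S) * ln (w S).

Lemma KLhat_dual : KLhat = \sum_j lamr j * mu0 j - ln Phi.
Proof.
have ln_w S : w S * xi (psi phi S) * ln (w S) =
    \sum_j (if j \in S then w S * xi (psi phi S) * lamr j else 0) -
    w S * xi (psi phi S) * ln Phi.
  have [S_fin | S_inf] := boolP (lam_finite_on S); last first.
    by rewrite wS_infinite // !mul0r subr0 big1 // => j _; rewrite mul0r if_same.
  by rewrite ln_wS // mulrBr mulr_sumr -big_mkcond.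
rewrite /KLhat (eq_bigr _ (fun S _ => ln_w S)) sumrB -mulr_suml sum_wS mul1r.
congr (_ - _); rewrite exchange_big /=; apply: eq_bigr => j _.
rewrite lam_sol mulr_sumr -big_mkcond /=; apply: eq_bigr => S _.
by rewrite mulrC.
Qed.

Lemma KLhat_dualE : (\sum_(i < n) (lam i * (mu0 i)%:E) - (ln Phi)%:E)%E = KLhat%:E.
Proof.
rewrite KLhat_dual EFinB -sumEFin; congr (_ - _)%E; apply: eq_bigr => j _.
rewrite /lamr; move: (lam_neqy j) (@mu0_lamNy j); case: (lam j) => [r | | ] //= _ mu0j.
by rewrite mu0j // mule0 mul0r.
Qed.

Section Enumeration.
Variables (e : nat -> sent ctype) (k : 'I_n -> nat).
Hypothesis e_k : forall i, e (k i) = phi i.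

Definition cell m (T : {set 'I_m}) := psi (fun i : 'I_m => e i) T.

(* Beyond this depth every phi_i is among the enumerated sentences. *)
Definition depth := (\max_(i < n) (k i).+1)%N.

Lemma k_lt_depth m i : (depth <= m)%N -> (k i < m)%N.
Proof. by apply: leq_trans; apply: (@leq_bigmax _ (fun i => (k i).+1)). Qed.

Definition phi_set m (T : {set 'I_m}) : {set 'I_n} :=
  [set i | [exists t in T, nat_of_ord t == k i]].

Lemma cells_sum1 m (nu : sent ctype -> R) :
  is_prob nu -> \sum_(T : {set 'I_m}) nu (cell T) = 1.
Proof. by move=> nu_prob; exact: (prob_partition_sum1 nu_prob (psi_partition _)). Qed.

Section Deep.
Variables (m : nat) (m_deep : (depth <= m)%N).

Lemma holds_cell_psi M (T : {set 'I_m}) :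
  holds M (cell T) -> holds M (psi phi (phi_set T)).
Proof.
move=> cellT; rewrite holds_psi; apply/forallP => i; rewrite -e_k inE.
have k_lt := k_lt_depth i m_deep.
rewrite (holds_psi_mem (Ordinal k_lt) cellT).
apply/eqP; apply/idP/idP => [kT | /exists_inP [t tT /eqP tk]].
  by apply/exists_inP; exists (Ordinal k_lt).
by rewrite (_ : Ordinal k_lt = t) //; apply: val_inj.
Qed.

Lemma holds_cell_psiE M (T : {set 'I_m}) S :
  holds M (cell T) -> holds M (psi phi S) = (phi_set T == S).
Proof.
move=> /holds_cell_psi cellT; apply/idP/eqP => [psiS | <- //].
exact: (proj1 (psi_partition phi) M _ _ cellT psiS).
Qed.

Lemma mu_hat_cellE (T : {set 'I_m}) : mu_hat (cell T) = w (phi_set T) * xi (cell T).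
Proof. by apply: mu_hat_cell => M; exact: holds_cell_psi. Qed.

Lemma KLpart_mu_hat : KLpart e mu_hat xi m = KLhat%:E.
Proof.
rewrite /KLpart (eq_bigr (fun T => (w (phi_set T) * ln (w (phi_set T)) * xi (cell T))%:E)).
  rewrite sumEFin (partition_big (@phi_set m) xpredT) //=; congr (_%:E).
  apply: eq_bigr => S _; rewrite (eq_bigr (fun T => w S * ln (w S) * xi (cell T))).
    rewrite -mulr_sumr mulrAC.
    rewrite -(prob_sum_cells (s := psi phi S) xi_prob (psi_partition _)) //.
    by move=> M T; exact: holds_cell_psiE.
  by move=> T /eqP ->.
move=> T _; rewrite -/(cell T) mu_hat_cellE klterm_mull ?wS_ge0 ?prob_ge0 //.
by rewrite mulrAC.
Qed.

End Deep.

Lemma KL_mu_hat : KL e mu_hat xi = KLhat%:E.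
Proof.
rewrite /KL; apply: cvg_lim => //; apply: cvg_near_cst.
by exists depth => // m /= m_deep; exact: KLpart_mu_hat.
Qed.

Section Constrained.
Variables (mu : sent ctype -> R) (m : nat).
Hypotheses (mu_prob : is_prob mu) (mu_phi : forall i, mu (phi i) = mu0 i).
Hypothesis m_deep : (depth <= m)%N.

Lemma mu0_cells j : mu0 j = \sum_(T : {set 'I_m} | j \in phi_set T) mu (cell T).
Proof.
rewrite -mu_phi; apply: (prob_sum_cells (d := @cell m) mu_prob (psi_partition _)) => M T.
by move=> /(holds_cell_psi m_deep); exact: holds_psi_mem.
Qed.

Lemma constrained_finite (T : {set 'I_m}) : 0 < mu (cell T) -> lam_finite_on (phi_set T).
Proof.
move=> mu_gt0; apply/forall_inP => j jT; apply/eqP => lamj.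
move: (mu0_lamNy lamj); rewrite mu0_cells => /psumr_eq0P mu_cells0.
by move: mu_gt0; rewrite mu_cells0 ?ltxx // => T' _; exact: prob_ge0.
Qed.

Lemma sum_cell_ln_wS : \sum_(T : {set 'I_m}) mu (cell T) * ln (w (phi_set T)) = KLhat.
Proof.
have ln_w (T : {set 'I_m}) : mu (cell T) * ln (w (phi_set T)) =
    \sum_j (if j \in phi_set T then mu (cell T) * lamr j else 0) - mu (cell T) * ln Phi.
  have [-> | mu_neq0] := eqVneq (mu (cell T)) 0.
    by rewrite !mul0r subr0 big1 // => j _; rewrite mul0r if_same.
  have mu_gt0 : 0 < mu (cell T) by rewrite lt_def mu_neq0 prob_ge0.
  by rewrite ln_wS ?(constrained_finite mu_gt0) // mulrBr mulr_sumr -big_mkcond.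
rewrite KLhat_dual (eq_bigr _ (fun T _ => ln_w T)) sumrB -mulr_suml cells_sum1 // mul1r.
congr (_ - _); rewrite exchange_big /=; apply: eq_bigr => j _.
by rewrite mu0_cells mulr_sumr -big_mkcond; apply: eq_bigr => T _; rewrite mulrC.
Qed.

(* Beyond [depth], log (mu / xi) = log (mu / mu_hat) + log w on every cell, and
   the constraints on mu evaluate the second sum (sum_cell_ln_wS). *)
Lemma KLpart_pythagoras : (forall T : {set 'I_m}, 0 < mu (cell T) -> 0 < xi (cell T)) ->
  KLpart e mu xi m =
  (\sum_(T : {set 'I_m}) mu (cell T) * ln (mu (cell T) / mu_hat (cell T)) + KLhat)%:E.
Proof.
move=> xi_dom; rewrite -sum_cell_ln_wS -big_split /KLpart -sumEFin.
apply: eq_bigr => T _ /=; rewrite -/(cell T) klterm_fin ?prob_ge0 // => [|/xi_dom //].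
congr (_%:E).
have [-> | mu_neq0] := eqVneq (mu (cell T)) 0; first by rewrite !mul0r addr0.
have mu_gt0 : 0 < mu (cell T) by rewrite lt_def mu_neq0 prob_ge0.
have w_gt0 := wS_gt0 (constrained_finite mu_gt0).
have xi_gt0 := xi_dom T mu_gt0.
have winv_gt0 : 0 < (w (phi_set T))^-1 by rewrite invr_gt0.
have ratio_gt0 : 0 < mu (cell T) / xi (cell T) by rewrite divr_gt0.
rewrite mu_hat_cellE // -mulrDr invfM mulrCA (lnM winv_gt0 ratio_gt0) lnV ?posrE //.
by rewrite addrC addNKr.
Qed.

End Constrained.

(* Either some cell has positive mu-mass but xi-mass 0, so KL e mu xi = +oo, or
   Gibbs' inequality applies on a partition separating mu from mu_hat. *)
Lemma KL_mu_hat_lt mu : (forall s, exists m, e m = s) ->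
  is_prob mu -> (forall i, mu (phi i) = mu0 i) -> mu <> mu_hat ->
  (KL e mu_hat xi < KL e mu xi)%E.
Proof.
move=> e_surj mu_prob mu_phi mu_neq.
have [m [m_deep [T0 cellT0_neq]]] :=
  exists_cell_neq depth e_surj mu_prob mu_hat_prob mu_neq.
rewrite KL_mu_hat.
have [[T [mu_gt0 xi0]] | not_dom] :=
  pselect (exists T : {set 'I_m}, 0 < mu (cell T) /\ xi (cell T) = 0).
  by rewrite (KL_eqy xi_prob mu_prob mu_gt0 xi0) ltry.
have xi_dom (T : {set 'I_m}) : 0 < mu (cell T) -> 0 < xi (cell T).
  move=> mu_gt0; rewrite lt_def prob_ge0 // andbT.
  by apply/eqP => xi0; apply: not_dom; exists T.
apply: lt_le_trans (KLpart_le_KL e xi_prob m mu_prob).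
rewrite (KLpart_pythagoras mu_prob mu_phi m_deep xi_dom) lte_fin ltrDr.
apply: gibbs_lt => [T | T | T _ mu_gt0 | | ]; last by exists T0.
- exact: prob_ge0.
- exact: prob_ge0 mu_hat_prob _.
- rewrite mu_hat_cellE // mulr_gt0 ?xi_dom //.
  exact: wS_gt0 (constrained_finite mu_prob mu_phi m_deep mu_gt0).
- by rewrite !cells_sum1 //; exact: mu_hat_prob.
Qed.

End Enumeration.

End MinimallyMoreInformative.

Theorem mainTheorem5 (R : realType) (C : Type) (ctype : C -> ty)
  (Ccount : countable_alphabet C)
  (n : nat) (phi : 'I_n -> sent ctype) (mu0 : 'I_n -> R)
  (mu0_01 : forall i, 0 <= mu0 i <= 1)
  (xi : sent ctype -> R) (xi_prob : is_prob xi)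
  (mu0_ext : exists mu : sent ctype -> R, is_prob mu /\ forall i, mu (phi i) = mu0 i)
  (xi_pos : forall S : {set 'I_n}, satisfiable (psi phi S) -> 0 < xi (psi phi S))
  (lam : 'I_n -> \bar R) (lam_fin : forall j, lam j != +oo%E)
  (lam_sol : forall i : 'I_n,
      mu0 i = \sum_(S : {set 'I_n} | i \in S) wS xi phi lam S * xi (psi phi S))
  (e : nat -> sent ctype) (e_enum : forall s : sent ctype, exists k, e k = s) :
  let muhat := mu_hat xi phi lam in
  [/\ is_prob muhat,
      (forall i, muhat (phi i) = mu0 i),
      (forall mu : sent ctype -> R, is_prob mu -> (forall i, mu (phi i) = mu0 i) ->
          mu <> muhat -> (KL e muhat xi < KL e mu xi)%E),
      KL e muhat xi =
        (\sum_(S : {set 'I_n}) klterm (muhat (psi phi S)) (xi (psi phi S)))%E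
    & KL e muhat xi =
        (\sum_(i < n) (lam i * (mu0 i)%:E) - (ln (Phi xi phi lam))%:E)%E].
Proof.
move=> muhat.
have [k e_k] := boolp.choice (fun i => e_enum (phi i)).
have KL_muhat := KL_mu_hat lam xi_prob e_k.
split.
- exact: (mu_hat_prob xi_prob mu0_ext xi_pos lam_sol).
- exact: (mu_hat_phi xi_prob lam_sol).
- by move=> mu; exact: (KL_mu_hat_lt xi_prob mu0_ext xi_pos lam_fin lam_sol e_k e_enum).
- rewrite KL_muhat -sumEFin; apply: eq_bigr => S _.
  by rewrite /muhat (mu_hat_cell lam xi_prob (S := S)) // klterm_mull ?wS_ge0 ?prob_ge0.
- by rewrite KL_muhat KLhat_dualE.
Qed.
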